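(* Let $\mathcal{D}$ be a finite set, $n\ge3$ and $k\ge0$ integers. The share of $n$-ary relations on $\mathcal{D}$ that are projoin reducible with $k$ parameters, among all $2^{|\mathcal{D}|^n}$ $n$-ary relations on $\mathcal{D}$, is $<1$ when $|\mathcal{D}|>\binom{n+k}{n-1}$, and tends to $0$ as $|\mathcal{D}|\to\infty$ (with $n,k$ fixed).
   Context: An $n$-ary relation on $\mathcal{D}$ is $R\subseteq\mathcal{D}^\Sigma$ with $\Sigma=\{1,\dots,n\}$. For attributed relations $R_i\subseteq\mathcal{D}^{\Lambda_i}$, the join is $\{a\in\mathcal{D}^{\cup_i\Lambda_i}: a|_{\Lambda_i}\in R_i\ \forall i\}$ and $\pi_\Gamma$ denotes restriction of all tuples to $\Gamma$. $R$ is projoin reducible with $k$ parameters if there is a set $\textup{T}$ of $k$ attributes disjoint from $\Sigma$, a cover $\textup{T}\cup\Sigma=\Lambda_1\cup\dots\cup\Lambda_m$ with $0<|\Lambda_i|<n$, and $R^{\Lambda_i}\subseteq\mathcal{D}^{\Lambda_i}$ such that $R=\pi_\Sigma[R^{\Lambda_1}\Join\dots\Join R^{\Lambda_m}]$. *)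

From HB Require Import structures.
From mathcomp Require Import all_boot all_order all_algebra.
From mathcomp Require Import boolp.

Set Implicit Arguments.
Unset Strict Implicit.
Unset Printing Implicit Defensive.

(* Attributes: the n-ary relation lives on Sigma = 'I_n (= {1,...,n}).
   For projoin reductions with k parameters we use the attribute set
   'I_(n+k): the first n attributes (lshift k i) form Sigma, the last k
   attributes form the parameter set T (disjoint from Sigma). *)

Definition restr (D : finType) (N : nat) (L : {set 'I_N})
  (a : {ffun 'I_N -> D}) : {ffun {x : 'I_N | x \in L} -> D} :=
  [ffun x => a (val x)].

Definition proj_Sigma (D : finType) (n k : nat)
  (a : {ffun 'I_(n + k) -> D}) : {ffun 'I_n -> D} :=
  [ffun i => a (lshift k i)].

Definition join (D : finType) (N m : nat) (L : 'I_m -> {set 'I_N})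
  (RL : forall i : 'I_m, {set {ffun {x : 'I_N | x \in L i} -> D}}) :
  {set {ffun 'I_N -> D}} :=
  [set a : {ffun 'I_N -> D} | [forall i, restr (L i) a \in RL i]].

Definition projoin_reducible (D : finType) (n k : nat)
  (R : {set {ffun 'I_n -> D}}) : Prop :=
  exists (m : nat) (L : 'I_m -> {set 'I_(n + k)})
         (RL : forall i : 'I_m, {set {ffun {x : 'I_(n + k) | x \in L i} -> D}}),
    [/\ \bigcup_(i < m) L i = [set: 'I_(n + k)],
        (forall i, 0 < #|L i| < n)%N
      & R = [set @proj_Sigma D n k a | a in join RL]].

Definition reducible_rels (D : finType) (n k : nat) : {set {set {ffun 'I_n -> D}}} :=
  [set R | `[< @projoin_reducible D n k R >]].

Definition reducible_share (D : finType) (n k : nat) : rat :=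
  ((#|reducible_rels D n k|)%:R / (2 ^ (#|D| ^ n))%:R)%R.

From HB Require Import structures.
From mathcomp Require Import all_boot all_order all_algebra.
From mathcomp Require Import boolp zify.

Set Implicit Arguments.
Unset Strict Implicit.
Unset Printing Implicit Defensive.

Import Order.TTheory GRing.Theory Num.Theory.

(* Each attribute set L_i of a projoin reduction has at most n - 1 elements,
   so it lies in some (n-1)-subset S of the n + k attributes.  Hence the join
   is cut out by its own traces on the (n-1)-subsets: a tuple is in the join
   iff each of its traces lies in the trace of the join on the same subset.
   A reducible relation is thus determined by one (n-1)-ary relation per
   (n-1)-subset, which leaves at most 2 ^ (|D| ^ (n-1) * C(n+k, n-1)) of them
   among the 2 ^ (|D| ^ n) relations, a share of at most
   2 ^ -(|D| - C(n+k, n-1)) once |D| >= C(n+k, n-1). *)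

Lemma card_set_of (T : finType) : #|{set T}| = 2 ^ #|T|.
Proof. by rewrite -[LHS]cardsT -powersetT card_powerset cardsT. Qed.

Lemma exists_card_superset (T : finType) (A : {set T}) r :
  (#|A| <= r <= #|T|)%N -> exists2 S : {set T}, A \subset S & #|S| = r.
Proof.
case/andP=> /subnKC <-; elim: (r - #|A|)%N => [|j IHj] leAjT.
  by exists A; rewrite ?addn0.
rewrite addnS in leAjT; have [S sAS cardS] := IHj (ltnW leAjT).
have /subsetPn[z _ Sz] : ~~ ([set: T] \subset S).
  by apply: contraTN leAjT => /subset_leq_card; rewrite cardsT cardS -ltnNge.
exists (z |: S); first exact: subset_trans sAS (subsetUr _ _).
by rewrite cardsU1 Sz cardS addnS.
Qed.

Lemma expn_mul_add_le d c n :
  (c <= d)%N -> (d ^ n * c + (d - c) <= d ^ n.+1)%N.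
Proof.
case: d => [|d]; first by rewrite leqn0 => /eqP->; rewrite muln0.
rewrite expnSr; have : (0 < d.+1 ^ n)%N by rewrite expn_gt0.
set p := (d.+1 ^ n)%N; nia.
Qed.

Section Traces.

Variables (D : finType) (N r : nat) (x0 : 'I_N).

Definition rsubset := {S : {set 'I_N} | #|S| == r}.

Lemma card_rsubset : #|{: rsubset}| = 'C(N, r).
Proof.
rewrite card_sig -[N in 'C(N, _)]card_ord -card_draws.
by apply: eq_card => S; rewrite !inE.
Qed.

(* The default [x0] of [nth] is never reached: [enum (val S)] has size [r]. *)
Definition rsubset_nth (S : rsubset) (t : 'I_r) : 'I_N :=
  nth x0 (enum (val S)) t.

Lemma rsubset_nth_onto (S : rsubset) z :
  z \in val S -> exists t, rsubset_nth S t = z.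
Proof.
move=> Sz; have lt_zr : (index z (enum (val S)) < r)%N.
  by rewrite -[X in (_ < X)%N](eqP (valP S)) cardE index_mem mem_enum.
by exists (Ordinal lt_zr); rewrite /rsubset_nth nth_index ?mem_enum.
Qed.

Definition trace (a : {ffun 'I_N -> D}) (S : rsubset) : {ffun 'I_r -> D} :=
  [ffun t => a (rsubset_nth S t)].

Definition glue (x : {ffun rsubset -> {set {ffun 'I_r -> D}}}) :
  {set {ffun 'I_N -> D}} :=
  [set a | [forall S, trace a S \in x S]].

Lemma restr_eq_trace (L : {set 'I_N}) (S : rsubset) a b :
  L \subset val S -> trace a S = trace b S -> restr L a = restr L b.
Proof.
move=> sLS /ffunP eq_ab; apply/ffunP => y; rewrite !ffunE.
have [t <-] := rsubset_nth_onto (subsetP sLS _ (valP y)).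
by have := eq_ab t; rewrite !ffunE.
Qed.

Lemma join_glue m (L : 'I_m -> {set 'I_N})
    (RL : forall i, {set {ffun {x | x \in L i} -> D}}) :
  (r <= N)%N -> (forall i, #|L i| <= r)%N ->
  glue [ffun S => trace^~ S @: join RL] = join RL.
Proof.
move=> le_rN le_Lr; apply/setP => a; rewrite inE.
apply/forallP/idP => [a_glued | a_joined S]; last by rewrite ffunE; apply: imset_f.
rewrite inE; apply/forallP => i.
have [S0 sLS0 cardS0] : exists2 S0 : {set 'I_N}, L i \subset S0 & #|S0| = r.
  by apply: exists_card_superset; rewrite le_Lr card_ord.
pose S : rsubset := Sub S0 (introT eqP cardS0).
have := a_glued S; rewrite ffunE => /imsetP[b].
rewrite inE => /forallP/(_ i) + tr_ab.
by rewrite (@restr_eq_trace _ S _ _ sLS0 tr_ab).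
Qed.

End Traces.

Lemma card_reducible_rels (D : finType) n k : (0 < n)%N ->
  (#|reducible_rels D n k| <= 2 ^ (#|D| ^ (n - 1) * 'C(n + k, n - 1)))%N.
Proof.
move=> n_gt0; have x0 : 'I_(n + k) := Ordinal (leq_trans n_gt0 (leq_addr k n)).
pose glued x := [set proj_Sigma a | a in @glue D _ (n - 1) x0 x].
have : reducible_rels D n k \subset glued @: setT.
  apply/subsetP => R; rewrite inE => /asboolP[m [L [RL [_ lt_Ln ->]]]].
  apply/imsetP; exists [ffun S => trace x0 ^~ S @: join RL]; first by rewrite inE.
  by rewrite /glued join_glue // => [|i]; [lia | have := lt_Ln i; lia].
move/subset_leq_card/leq_trans; apply; apply: leq_trans (leq_imset_card _ _) _.
by rewrite cardsT card_ffun card_set_of card_ffun card_ord card_rsubset expnM.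
Qed.

Lemma reducible_share_le (D : finType) n k :
  (0 < n)%N -> ('C(n + k, n - 1) <= #|D|)%N ->
  (reducible_share D n k <= ((2 ^ (#|D| - 'C(n + k, n - 1)))%:R)^-1)%R.
Proof.
move=> n_gt0 le_Cd; set C := 'C(_, _) in le_Cd *; set d := #|D| in le_Cd *.
have gap : (d ^ (n - 1) * C + (d - C) <= d ^ n)%N.
  by rewrite -[X in (_ <= _ ^ X)%N](subnK n_gt0) addn1 expn_mul_add_le.
have le_gap : (d - C <= d ^ n)%N by apply: leq_trans gap; rewrite leq_addl.
rewrite /reducible_share ler_pdivrMr ?ltr0n ?expn_gt0 //.
rewrite -(subnKC le_gap) expnD natrM mulKf ?pnatr_eq0 -?lt0n ?expn_gt0 // ler_nat.
apply: leq_trans (card_reducible_rels D k n_gt0) _.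
by rewrite leq_exp2l // leq_subRL // addnC.
Qed.

Theorem theorem24 (n k : nat) : (3 <= n)%N ->
  (forall D : finType, ('C(n + k, n - 1) < #|D|)%N ->
     (reducible_share D n k < 1)%R) /\
  (forall eps : rat, (0 < eps)%R ->
     exists N0 : nat, forall D : finType, (N0 <= #|D|)%N ->
       (reducible_share D n k < eps)%R).
Proof.
move=> n_ge3; have n_gt0 : (0 < n)%N by apply: leq_trans n_ge3.
set C := 'C(n + k, n - 1).
split=> [D lt_Cd | eps eps_gt0].
  apply: le_lt_trans (reducible_share_le n_gt0 (ltnW lt_Cd)) _.
  by rewrite invf_lt1 ?ltr0n ?expn_gt0 // ltr1n -[X in (X < _)%N](expn0 2) ltn_exp2l ?subn_gt0.
set b := Num.bound eps^-1; exists (C + b)%N => D le_Cbd.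
have le_Cd : (C <= #|D|)%N by apply: leq_trans le_Cbd; rewrite leq_addr.
apply: le_lt_trans (reducible_share_le n_gt0 le_Cd) _.
rewrite invf_plt ?posrE ?ltr0n ?expn_gt0 //.
have /archi_boundP lt_eps'_b : (0 <= eps^-1)%R by rewrite invr_ge0 ltW.
apply: lt_le_trans lt_eps'_b _; rewrite ler_nat.
by apply: leq_trans (ltnW (ltn_expl _ (ltnSn 1))) _; rewrite leq_exp2l // leq_subRL.
Qed.
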